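(* Let $M$ be a matroid on $[n]$ and $\preceq$ a term order on $\mathbb{R}[x_1,\dots,x_n]$. Then $\mathcal{S}_\preceq(M)$ is a subcomplex of the independence complex $\mathcal{I}(M)$ of $M$.
   Context: $V_M=\{\mathbf{e}_B:B \text{ a basis of } M\}\subseteq\{0,1\}^n$ ($\mathbf{e}_B$ the characteristic vector). $\mathcal{S}_\preceq(M)=\{\tau\subseteq[n]:\prod_{i\in\tau}x_i\notin\mathrm{in}_\preceq(I(V_M))\}$, where $I(V_M)$ is the vanishing ideal of $V_M$ and $\mathrm{in}_\preceq$ the initial ideal. $\mathcal{I}(M)$ is the simplicial complex of independent sets of $M$. *)

From HB Require Import structures.
From mathcomp Require Import all_boot all_order all_algebra.
From mathcomp Require Import reals.
From mathcomp Require Import mpoly.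
Set Implicit Arguments. Unset Strict Implicit. Unset Printing Implicit Defensive.
Import GRing.Theory.
Local Open Scope ring_scope.

Definition is_matroid_bases (n : nat) (bases : {set {set 'I_n}}) : Prop :=
  bases != set0 /\
  forall B1 B2, B1 \in bases -> B2 \in bases ->
    forall x, x \in B1 :\: B2 ->
      exists2 y, y \in B2 :\: B1 & (B1 :\ x) :|: [set y] \in bases.

Definition indep_complex (n : nat) (bases : {set {set 'I_n}}) : {set {set 'I_n}} :=
  [set I : {set 'I_n} | [exists B in bases, I \subset B]].

Definition term_order (n : nat) (le : rel 'X_{1..n}) : Prop :=
  reflexive le /\ antisymmetric le /\ transitive le /\ total le /\
  (forall m1 m2 m3, le m1 m2 -> le (mnm_add m1 m3) (mnm_add m2 m3)) /\
  (forall m, le (@mnm0 n) m).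

(* V_M = { e_B : B basis } ; characteristic vector e_B. *)
Definition char_vec (R : realType) (n : nat) (B : {set 'I_n}) : 'I_n -> R :=
  fun i => (i \in B)%:R.

Definition vanishing_ideal (R : realType) (n : nat) (bases : {set {set 'I_n}})
  (p : {mpoly R[n]}) : Prop :=
  forall B, B \in bases -> p.@[char_vec R B] = 0.

Definition is_lead_mon (R : realType) (n : nat) (le : rel 'X_{1..n})
  (p : {mpoly R[n]}) (m : 'X_{1..n}) : Prop :=
  m \in msupp p /\ forall m', m' \in msupp p -> le m' m.

Definition initial_ideal (R : realType) (n : nat) (le : rel 'X_{1..n})
  (I : {mpoly R[n]} -> Prop) (q : {mpoly R[n]}) : Prop :=
  exists s : seq ({mpoly R[n]} * {mpoly R[n]} * 'X_{1..n}),
    (forall t, t \in s -> [/\ I t.1.2, t.1.2 != 0 & is_lead_mon le t.1.2 t.2]) /\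
    q = \sum_(t <- s) t.1.1 * 'X_[t.2].

Definition standard_complex (R : realType) (n : nat) (le : rel 'X_{1..n})
  (bases : {set {set 'I_n}}) (tau : {set 'I_n}) : Prop :=
  ~ initial_ideal le (@vanishing_ideal R n bases) (\prod_(i in tau) 'X_i).

Definition is_subcomplex (n : nat) (S : {set 'I_n} -> Prop) (K : {set {set 'I_n}}) : Prop :=
  (forall sigma tau : {set 'I_n}, tau \subset sigma -> S sigma -> S tau) /\
  (forall tau, S tau -> tau \in K).

(* A set tau contained in no basis meets the complement of every basis B, so
   some factor x_i of x^tau vanishes at e_B: the squarefree monomial x^tau
   lies in I(V_M). Being a monomial, it is its own leading monomial, hence
   lies in in_le(I(V_M)); so every face of S_le(M) is independent. Downward
   closure holds because in_le(I) is an ideal and x^tau divides x^sigma when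
   tau is a subset of sigma. *)
From HB Require Import structures.
From mathcomp Require Import all_boot all_order all_algebra.
From mathcomp Require Import reals.
From mathcomp Require Import mpoly.
Set Implicit Arguments. Unset Strict Implicit. Unset Printing Implicit Defensive.
Import GRing.Theory.
Local Open Scope ring_scope.

Lemma big_prod_subset (S : comNzSemiRingType) (T : finType) (F : T -> S)
    (A B : {set T}) : A \subset B ->
  \prod_(i in B) F i = (\prod_(i in A) F i) * \prod_(i in B :\: A) F i.
Proof.
move=> /setIidPr AB.
by rewrite (big_setID A) /= AB.
Qed.

Section InitialIdeal.

Variables (R : realType) (n : nat) (le : rel 'X_{1..n}).
Variable I : {mpoly R[n]} -> Prop.

Lemma initial_idealMr (q r : {mpoly R[n]}) :
  initial_ideal le I q -> initial_ideal le I (q * r).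
Proof.
case=> s [s_lead ->].
exists [seq (t.1.1 * r, t.1.2, t.2) | t <- s]; split.
  by move=> u /mapP [t st ->] /=; apply: s_lead.
rewrite big_map mulr_suml; apply: eq_bigr => t _ /=.
by rewrite mulrAC.
Qed.

Lemma is_lead_monX (m : 'X_{1..n}) :
  reflexive le -> is_lead_mon le ('X_[m] : {mpoly R[n]}) m.
Proof.
move=> le_refl; rewrite /is_lead_mon msuppX inE; split=> // m'.
by rewrite inE => /eqP ->.
Qed.

Lemma initial_ideal_monomial (m : 'X_{1..n}) :
  reflexive le -> I 'X_[m] -> initial_ideal le I 'X_[m].
Proof.
move=> le_refl Im; exists [:: (1, 'X_[m], m)]; split.
  move=> t; rewrite inE => /eqP -> /=; split=> //.
    by rewrite -msupp_eq0 msuppX.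
  exact: is_lead_monX.
by rewrite big_seq1 mul1r.
Qed.

End InitialIdeal.

Section StandardComplex.

Variables (R : realType) (n : nat) (le : rel 'X_{1..n}).
Variable bases : {set {set 'I_n}}.

Lemma standard_complex_sub (sigma tau : {set 'I_n}) : tau \subset sigma ->
  standard_complex R le bases sigma -> standard_complex R le bases tau.
Proof.
move=> tau_sigma Ssigma Itau; apply: Ssigma.
by rewrite (big_prod_subset _ tau_sigma); apply: initial_idealMr.
Qed.

Lemma vanishing_ideal_prodX (tau : {set 'I_n}) :
  tau \notin indep_complex bases ->
  vanishing_ideal bases (\prod_(i in tau) 'X_i : {mpoly R[n]}).
Proof.
rewrite inE => tau_dep B Bbasis.
have [i /andP [tau_i Bi]] : exists i, (i \in tau) && (i \notin B).
  apply/existsP; apply: contraNT tau_dep; rewrite negb_exists => /forallP tauB.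
  apply/existsP; exists B; rewrite Bbasis; apply/subsetP => j tau_j.
  by move: (tauB j); rewrite tau_j negbK.
by rewrite rmorph_prod (bigD1 i) //= mevalXU /char_vec (negbTE Bi) mul0r.
Qed.

Lemma standard_complex_indep (tau : {set 'I_n}) : reflexive le ->
  standard_complex R le bases tau -> tau \in indep_complex bases.
Proof.
move=> le_refl; apply: contraPT => /vanishing_ideal_prodX tau_dep; apply.
rewrite mprodXE; apply: initial_ideal_monomial => //.
by rewrite -mprodXE.
Qed.

End StandardComplex.

Theorem corollary2p5 (R : realType) (n : nat) (bases : {set {set 'I_n}})
  (le : rel 'X_{1..n}) :
  is_matroid_bases bases -> term_order le ->
  is_subcomplex (@standard_complex R n le bases) (indep_complex bases).
Proof.
move=> _ [le_refl _]; split.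
- exact: standard_complex_sub.
- by move=> tau; apply: standard_complex_indep.
Qed.
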